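(* Let $f(X)=a_kX^k+\cdots+a_0\in\mathbb{Z}[X]$ be a nonconstant polynomial of degree $k\ge1$ with roots $\alpha_1,\dots,\alpha_k$ (with multiplicity) in an algebraic closure of $\mathbb{Q}$, and define $$\widetilde{f}(X):=a_k^{2k-2}\prod_{\substack{1\leq i,j\leq k\\ i\neq j}}\bigl(X-(\alpha_i-\alpha_j)\bigr).$$ Then $f$ and $\widetilde{f}$ have the same Galois group over $\mathbb{Q}$. *)

From HB Require Import structures.
From mathcomp Require Import all_boot all_order all_algebra all_fingroup all_field.
Set Implicit Arguments. Unset Strict Implicit. Unset Printing Implicit Defensive.
Import GRing.Theory Num.Theory.
Local Open Scope ring_scope.

Definition polyL (L : splittingFieldType rat) (f : {poly int}) : {poly L} :=
  map_poly (fun z : int => z%:~R) f.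

(* f~(X) = a_k^(2k-2) * prod_{i <> j} (X - (alpha_i - alpha_j)), where
   alpha : 'I_k -> L lists the roots of f with multiplicity. *)
Definition ftilde (L : splittingFieldType rat) (f : {poly int})
    (alpha : 'I_(size f).-1 -> L) : {poly L} :=
  ((lead_coef f)%:~R ^+ (2 * (size f).-1 - 2)) *:
    \prod_(i < (size f).-1) \prod_(j < (size f).-1 | j != i)
       ('X - (alpha i - alpha j)%:P).

From HB Require Import structures.
From mathcomp Require Import all_boot all_order all_algebra all_fingroup all_field.
Set Implicit Arguments. Unset Strict Implicit. Unset Printing Implicit Defensive.
Import GRing.Theory Num.Theory.
Local Open Scope ring_scope.

(* The roots of f~ are the differences of roots of f, so its splitting field
   lies in that of f.  Conversely the sum of the roots of f is the rational
   number -a_(k-1)/a_k, and k alpha_i = sum_j (alpha_i - alpha_j) + sum_j alpha_j,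
   so every root of f lies in the splitting field of f~.  Hence the two
   splitting fields coincide, and so do their Galois groups. *)

Lemma root_scale_prod_XsubCP (R : idomainType) (I : finType) (P : pred I)
    (c : R) (x : I -> R) z :
  c != 0 -> reflect (exists2 i, P i & z = x i)
                    (root (c *: \prod_(i | P i) ('X - (x i)%:P)) z).
Proof.
move=> c_neq0; rewrite rootZ // rootE horner_prod.
apply: (iffP (prodf_eq0 _ _)) => -[i Pi].
  by rewrite hornerXsubC subr_eq0 => /eqP; exists i.
by move->; exists i; rewrite // hornerXsubC subrr.
Qed.

Lemma sum_roots_scale_prod (R : fieldType) (I : finType) (p : {poly R})
    (c : R) (x : I -> R) :
  c != 0 -> #|I| != 0%N -> p = c *: \prod_(i : I) ('X - (x i)%:P) ->
  \sum_(i : I) x i = - p`_#|I|.-1 / c.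
Proof.
move=> c_neq0 I_neq0 ->.
set s := map x (enum I).
have size_s : size s = #|I| by rewrite size_map -cardE.
have -> : \prod_(i : I) ('X - (x i)%:P) = \prod_(z <- s) ('X - z%:P).
  by rewrite big_map enumT.
have -> : \sum_(i : I) x i = \sum_(z <- s) z by rewrite big_map enumT.
by rewrite coefZ -size_s coefPn_prod_XsubC ?size_s // mulrN opprK mulrC mulKf.
Qed.

Section ExtensionField.

Variables (F : fieldType) (L : fieldExtType F).

Lemma mem_of_sum_diff (K : {subfield L}) (k : nat) (x : 'I_k -> L) :
  (k%:R : F) != 0 -> \sum_(j < k) x j \in K ->
  (forall i j, x i - x j \in K) -> forall i, x i \in K.
Proof.
move=> k_neq0 Ksum Kdiff i.
have -> : x i = (k%:R : F)^-1 *: (\sum_(j < k) (x i - x j) + \sum_(j < k) x j).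
  rewrite sumrB addrNK sumr_const card_ord -scaler_nat scalerA.
  by rewrite mulVf ?scale1r.
by rewrite rpredZ // rpredD // rpred_sum.
Qed.

Lemma mem_splittingFieldFor (U : {vspace L}) (E : {subfield L}) p x :
  splittingFieldFor U p E -> root p x -> x \in E.
Proof.
case=> rs Dp <- px; apply: seqv_sub_adjoin.
by rewrite -root_prod_XsubC -(eqp_root Dp).
Qed.

Lemma sub_splittingFieldFor (K E M : {subfield L}) p :
  splittingFieldFor K p E -> (K <= M)%VS ->
  (forall x, root p x -> x \in M) -> (E <= M)%VS.
Proof.
case=> rs Dp <- sKM Mroots; apply/Fadjoin_seqP; split=> // x rs_x.
by apply: Mroots; rewrite (eqp_root Dp) root_prod_XsubC.
Qed.

Lemma splittingFieldFor_eq (K E1 E2 : {subfield L}) p1 p2 :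
    splittingFieldFor K p1 E1 -> splittingFieldFor K p2 E2 ->
    (forall x, root p1 x -> x \in E2) -> (forall x, root p2 x -> x \in E1) ->
  E1 = E2.
Proof.
move=> split1 split2 roots1 roots2; apply/val_inj/eqP; rewrite eqEsubv.
have sKE (E : {subfield L}) p : splittingFieldFor K p E -> (K <= E)%VS.
  by case=> rs _ <-; apply: subv_adjoin_seq.
by rewrite (sub_splittingFieldFor split1 (sKE _ _ split2))
           ?(sub_splittingFieldFor split2 (sKE _ _ split1)).
Qed.

End ExtensionField.

Theorem lemma2p1 (L : splittingFieldType rat) (f : {poly int})
    (alpha : 'I_(size f).-1 -> L) :
  (1 < size f)%N ->
  polyL L f = (lead_coef f)%:~R *: \prod_(i < (size f).-1) ('X - (alpha i)%:P) ->
  forall E Et : {subfield L},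
    splittingFieldFor 1%VS (polyL L f) E ->
    splittingFieldFor 1%VS (ftilde alpha) Et ->
    ('Gal(E / 1%AS) \isog 'Gal(Et / 1%AS))%g.
Proof.
move=> size_f_gt1 Df E Et splitE splitEt.
have k_neq0 : (size f).-1 != 0%N by rewrite -lt0n -ltnS prednK // ltnW.
have a_neq0 : ((lead_coef f)%:~R : L) != 0.
  rewrite -(rmorph_int (in_alg L)) fmorph_eq0 intr_eq0 lead_coef_eq0.
  by rewrite -size_poly_gt0 ltnW.
have rootfP z := root_scale_prod_XsubCP predT alpha z a_neq0.
have rootftP z : reflect
    (exists2 ij, ij.2 != ij.1 & z = alpha ij.1 - alpha ij.2) (root (ftilde alpha) z).
  rewrite /ftilde pair_big_dep /=.
  exact: (root_scale_prod_XsubCP (fun ij => ij.2 != ij.1)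
            (fun ij => alpha ij.1 - alpha ij.2) z (expf_neq0 _ a_neq0)).
have alpha_E i : alpha i \in E.
  by apply: mem_splittingFieldFor splitE _; rewrite Df; apply/rootfP; exists i.
have diff_Et i j : alpha i - alpha j \in Et.
  have [->|ji] := eqVneq j i; first by rewrite subrr rpred0.
  by apply: mem_splittingFieldFor splitEt _; apply/rootftP; exists (i, j).
have alpha_Et i : alpha i \in Et.
  apply: (mem_of_sum_diff (F := rat)) diff_Et i; first by rewrite pnatr_eq0.
  rewrite (sum_roots_scale_prod a_neq0 _ Df) card_ord //.
  by rewrite /polyL coef_map_id0 ?mulr0z // rpred_div ?rpredN ?rpred_int.
have -> : E = Et.
  apply: (splittingFieldFor_eq (K := 1%AS) splitE splitEt) => z.
    by rewrite Df => /rootfP[i _ ->]; apply: alpha_Et.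
  by case/rootftP=> -[i j] _ ->; apply: rpredB (alpha_E i) (alpha_E j).
exact: isog_refl.
Qed.
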